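(* Let $d=1$ and $x,y\in\mathbb{R}$. If $1,x,y$ are linearly dependent over $\mathbb{Q}$ and $x$ or $y$ is irrational, then $(x,y)\notin\Pi$.
   Context: For $t\in\mathbb{R}$, $\|t\|$ is the distance from $t$ to $\mathbb{Z}$. Write $\mathbb{N}=\{1,2,\dots\}$. $\mathcal{D}$ is the set of all non-increasing $\psi:\mathbb{N}\to\mathbb{R}_{\ge0}$ with $\sum_n\psi(n)=\infty$. $W(\psi)$ is the set of $(x,y)\in\mathbb{R}^2$ with $\|nx+y\|<\psi(n)$ for infinitely many $n\in\mathbb{N}$, and $\Pi=\bigcap_{\psi\in\mathcal{D}}W(\psi)$. *)

From Stdlib Require Import Reals QArith Qreals.
Open Scope R_scope.

(* ||t|| = distance from t to Z.  Int_part t = up t - 1 = floor t. *)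
Definition distZ (t : R) : R :=
  Rmin (t - IZR (Int_part t)) (IZR (Int_part t) + 1 - t).

(* The class D: psi : N -> R_{>=0} (N = {1,2,...}), non-increasing, with
   divergent sum.  psi is represented as a function nat -> R whose value at 0
   is irrelevant (never used). *)
Definition in_D (psi : nat -> R) : Prop :=
  (forall n : nat, (1 <= n)%nat -> 0 <= psi n) /\
  (forall n : nat, (1 <= n)%nat -> psi (S n) <= psi n) /\
  (forall M : R, exists N : nat, M < sum_f_R0 (fun k => psi (S k)) N).

Definition in_W (psi : nat -> R) (x y : R) : Prop :=
  forall N : nat, exists n : nat,
    (N <= n)%nat /\ (1 <= n)%nat /\ distZ (INR n * x + y) < psi n.

Definition in_Pi (x y : R) : Prop :=
  forall psi : nat -> R, in_D psi -> in_W psi x y.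

Definition Q_lin_dep3 (x y : R) : Prop :=
  exists a b c : Q, ~ (a == 0 /\ b == 0 /\ c == 0)%Q /\
    Q2R a + Q2R b * x + Q2R c * y = 0.

Definition irrational (x : R) : Prop := ~ exists q : Q, x = Q2R q.

(** For a rational [x = r/t] and irrational [y], [||n x + y||] stays above the
    constant [||t y||/t]. Otherwise [s y = Q x + P] with [x] irrational, so
    [s (n x + y) = L x + P] with [L = s n + Q] and [||n x + y|| >= ||L x||/s];
    one takes [psi n = min_{1<=m<=s(n+K)} ||m x|| / s] with [K = |Q|]. This
    [psi] is non-increasing, and its sum diverges because [min_{1<=m<N} ||m x||]
    is at least [1/(2N)] whenever [N = u + v] comes from a pair of Farey
    neighbours [p/u < x < q/v] whose gaps [u x - p] and [q - v x] agree up to a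
    factor 2; mediant steps produce such pairs with arbitrarily large [u + v]. *)

From Stdlib Require Import Reals QArith Qreals ZArith Lra Lia Psatz.
Open Scope R_scope.

Lemma distZ_le_dist (t : R) (z : Z) : distZ t <= Rabs (t - IZR z).
Proof.
  destruct (base_Int_part t) as [h1 h2]. unfold distZ.
  destruct (Z_le_gt_dec z (Int_part t)) as [hz|hz].
  - apply IZR_le in hz. eapply Rle_trans; [apply Rmin_l|]. rewrite Rabs_pos_eq; lra.
  - assert (hz' : (Int_part t + 1 <= z)%Z) by lia. apply IZR_le in hz'.
    rewrite plus_IZR in hz'.
    eapply Rle_trans; [apply Rmin_r|]. rewrite Rabs_left1; lra.
Qed.

Lemma distZ_attained (t : R) : exists k : Z, Rabs (t - IZR k) = distZ t.
Proof.
  destruct (base_Int_part t) as [h1 h2]. unfold distZ, Rmin.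
  destruct Rle_dec.
  - exists (Int_part t). rewrite Rabs_pos_eq; lra.
  - exists (Int_part t + 1)%Z. rewrite plus_IZR, Rabs_left1; lra.
Qed.

Lemma distZ_nonneg (t : R) : 0 <= distZ t.
Proof. destruct (distZ_attained t) as [k <-]. apply Rabs_pos. Qed.

Lemma distZ_add_Z (t : R) (z : Z) : distZ (t + IZR z) = distZ t.
Proof.
  destruct (distZ_attained t) as [k hk], (distZ_attained (t + IZR z)) as [l hl].
  pose proof (distZ_le_dist (t + IZR z) (k + z)) as h1.
  pose proof (distZ_le_dist t (l - z)) as h2.
  rewrite plus_IZR in h1. rewrite minus_IZR in h2.
  replace (t + IZR z - (IZR k + IZR z)) with (t - IZR k) in h1 by ring.
  replace (t - (IZR l - IZR z)) with (t + IZR z - IZR l) in h2 by ring.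
  lra.
Qed.

Lemma distZ_mul_nat_le (s : nat) (t : R) : distZ (INR s * t) <= INR s * distZ t.
Proof.
  destruct (distZ_attained t) as [k <-].
  pose proof (distZ_le_dist (INR s * t) (Z.of_nat s * k)) as h.
  rewrite mult_IZR, <- INR_IZR_INZ in h.
  replace (INR s * t - INR s * IZR k) with (INR s * (t - IZR k)) in h by ring.
  rewrite Rabs_mult, (Rabs_pos_eq (INR s)) in h by apply pos_INR. exact h.
Qed.

Lemma irrational_mul_neq_Z (x : R) (m z : Z) :
  irrational x -> (0 < m)%Z -> IZR m * x <> IZR z.
Proof.
  intros Hx Hm E. apply Hx. exists (z # Z.to_pos m).
  unfold Q2R; simpl. rewrite Z2Pos.id by lia.
  apply IZR_lt in Hm. rewrite <- E. field. lra.
Qed.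

Lemma distZ_mul_pos (x : R) (t : nat) :
  irrational x -> (1 <= t)%nat -> 0 < distZ (INR t * x).
Proof.
  intros Hx Ht. destruct (distZ_attained (INR t * x)) as [k <-].
  apply Rabs_pos_lt. rewrite INR_IZR_INZ.
  apply Rminus_eq_contra, irrational_mul_neq_Z; [exact Hx | lia].
Qed.

Lemma distZ_le_half (t : R) : distZ t <= 1 / 2.
Proof. unfold distZ, Rmin. destruct Rle_dec; lra. Qed.

Definition often_above_harmonic (f : nat -> R) : Prop :=
  exists c, 0 < c /\ forall K, exists n, (K <= n)%nat /\ c <= INR n * f n.

Lemma sum_f_R0_antitone_tail (g : nat -> R) :
  (forall k, g (S k) <= g k) ->
  forall N d, sum_f_R0 g N + INR d * g (N + d)%nat <= sum_f_R0 g (N + d).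
Proof.
  intros Hg N d. induction d as [|d IH].
  - rewrite Nat.add_0_r. simpl. lra.
  - rewrite Nat.add_succ_r, S_INR. simpl sum_f_R0.
    pose proof (Hg (N + d)%nat). pose proof (pos_INR d). nra.
Qed.

Lemma in_D_of_often_above_harmonic (f : nat -> R) :
  (forall n, 0 <= f n) -> (forall n, f (S n) <= f n) ->
  often_above_harmonic f -> in_D f.
Proof.
  intros Hpos Hdec [c [Hc Hoft]].
  split; [intros; apply Hpos|]. split; [intros; apply Hdec|].
  set (g := fun k => f (S k)).
  (* a block of at least n/2 terms ending at f n contributes at least c/2 *)
  assert (Hblock : forall N, exists N', sum_f_R0 g N + c / 2 <= sum_f_R0 g N').
  { intros N. destruct (Hoft (2 * N + 2)%nat) as [n [hn hc]].
    exists (n - 1)%nat.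
    pose proof (sum_f_R0_antitone_tail g (fun k => Hdec (S k)) N (n - 1 - N)) as h.
    replace (N + (n - 1 - N))%nat with (n - 1)%nat in h by lia.
    unfold g in h at 2. replace (S (n - 1)) with n in h by lia.
    assert (hd : INR n / 2 <= INR (n - 1 - N)).
    { rewrite !minus_INR by lia. apply le_INR in hn.
      rewrite plus_INR, mult_INR in hn. simpl in hn |- *. lra. }
    assert (INR n / 2 * f n <= INR (n - 1 - N) * f n)
      by (apply Rmult_le_compat_r; [apply Hpos | exact hd]).
    lra. }
  assert (Hiter : forall j : nat, exists N, INR j * (c / 2) <= sum_f_R0 g N).
  { intros j. induction j as [|j [N hN]].
    - exists 0%nat. simpl. unfold g. rewrite Rmult_0_l. apply Hpos.
    - destruct (Hblock N) as [N' hN']. exists N'. rewrite S_INR. lra. }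
  intros M. destruct (INR_unbounded (M / (c / 2))) as [j hj].
  destruct (Hiter j) as [N hN]. exists N.
  apply Rlt_le_trans with (INR j * (c / 2)); [|exact hN].
  replace M with (M / (c / 2) * (c / 2)) by (field; lra).
  apply Rmult_lt_compat_r; lra.
Qed.

Lemma often_above_harmonic_scale (f : nat -> R) (k : R) :
  0 < k -> often_above_harmonic f -> often_above_harmonic (fun n => f n / k).
Proof.
  intros Hk [c [Hc Hoft]]. exists (c / k). split; [apply Rdiv_lt_0_compat; lra|].
  intros K. destruct (Hoft K) as [n [hn hc]]. exists n. split; [exact hn|].
  unfold Rdiv. rewrite <- Rmult_assoc. apply Rmult_le_compat_r; [|exact hc].
  left. apply Rinv_0_lt_compat, Hk.
Qed.

Lemma often_above_harmonic_dilate (f : nat -> R) (s K : nat) :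
  (forall n, f (S n) <= f n) -> (1 <= s)%nat ->
  often_above_harmonic f -> often_above_harmonic (fun n => f (s * (n + K))%nat).
Proof.
  intros Hdec Hs [c [Hc Hoft]].
  assert (Hanti : forall a b, (a <= b)%nat -> f b <= f a).
  { intros a b h. induction h; [lra | eapply Rle_trans; [apply Hdec | exact IHh]]. }
  assert (HS : 1 <= INR s) by (apply (le_INR 1); exact Hs).
  exists (c / (2 * INR s)). split; [apply Rdiv_lt_0_compat; lra|].
  intros K'. destruct (Hoft (s * (K' + 2 * K + 1))%nat) as [L [hL hc]].
  (* n is chosen with s (n + K) <= L < s (n + K + 1), and n >= K + 1 *)
  set (n := (L / s - K)%nat).
  pose proof (Nat.div_mod_eq L s) as hdm.
  pose proof (Nat.mod_upper_bound L s ltac:(lia)) as hmu.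
  assert (ht : (K' + 2 * K + 1 <= L / s)%nat) by nia.
  assert (hlow : (s * (n + K) <= L)%nat) by (unfold n; nia).
  assert (hup : (L <= s * (2 * n))%nat) by (unfold n; nia).
  exists n. split; [unfold n; lia|].
  pose proof (Hanti _ _ hlow) as hf.
  apply le_INR in hup. rewrite !mult_INR in hup. replace (INR 2) with 2 in hup by reflexivity.
  assert (0 <= f L) by (pose proof (pos_INR L); nra).
  apply (Rmult_le_reg_l (2 * INR s)); [lra|].
  replace (2 * INR s * (c / (2 * INR s))) with c by (field; lra).
  pose proof (pos_INR n).
  assert (INR L * f L <= INR s * (2 * INR n) * f L) by (apply Rmult_le_compat_r; lra).
  assert (0 <= INR s * (2 * INR n)) by nra.
  assert (INR s * (2 * INR n) * f L <= INR s * (2 * INR n) * f (s * (n + K))%nat)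
    by (apply Rmult_le_compat_l; lra).
  lra.
Qed.

Fixpoint min_dist (x : R) (L : nat) : R :=
  match L with
  | O => 1
  | S L' => Rmin (min_dist x L') (distZ (INR L * x))
  end.

Lemma min_dist_nonneg (x : R) (L : nat) : 0 <= min_dist x L.
Proof.
  induction L as [|L IH]; cbn [min_dist]; [lra|].
  apply Rmin_glb; [exact IH | apply distZ_nonneg].
Qed.

Lemma min_dist_succ_le (x : R) (L : nat) : min_dist x (S L) <= min_dist x L.
Proof. apply Rmin_l. Qed.

Lemma min_dist_antitone (x : R) (L1 L2 : nat) :
  (L1 <= L2)%nat -> min_dist x L2 <= min_dist x L1.
Proof.
  intros h. induction h as [|L2 h IH]; [lra|].
  eapply Rle_trans; [apply min_dist_succ_le | exact IH].
Qed.

Lemma min_dist_le_distZ (x : R) (L : nat) :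
  (1 <= L)%nat -> min_dist x L <= distZ (INR L * x).
Proof. intros hL. destruct L as [|L]; [lia | apply Rmin_r]. Qed.

Lemma min_dist_ge (x c : R) (L : nat) : c <= 1 ->
  (forall m, (1 <= m <= L)%nat -> c <= distZ (INR m * x)) -> c <= min_dist x L.
Proof.
  intros Hc Hm. induction L as [|L IH]; cbn [min_dist]; [exact Hc|].
  apply Rmin_glb.
  - apply IH. intros m hm. apply Hm. lia.
  - apply Hm. lia.
Qed.
Definition farey_bracket (x : R) (u p v q : Z) : Prop :=
  (0 < u)%Z /\ (0 < v)%Z /\ (u * q - p * v = 1)%Z /\
  IZR p < IZR u * x /\ IZR v * x < IZR q.

Lemma farey_bracket_gap (x : R) (u p v q m z : Z) :
  farey_bracket x u p v q -> (0 < m)%Z ->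
  IZR v * x - IZR q < IZR m * x - IZR z < IZR u * x - IZR p -> (u + v <= m)%Z.
Proof.
  intros [Hu [Hv [Hdet [Hp Hq]]]] Hm [Hlo Hhi].
  (* (m, z) = alpha (u, p) + beta (v, q), by the determinant condition *)
  set (alpha := (m * q - z * v)%Z). set (beta := (z * u - m * p)%Z).
  assert (Em : m = (alpha * u + beta * v)%Z).
  { unfold alpha, beta. transitivity (m * (u * q - p * v))%Z; [rewrite Hdet|]; ring. }
  assert (Ez : z = (alpha * p + beta * q)%Z).
  { unfold alpha, beta. transitivity (z * (u * q - p * v))%Z; [rewrite Hdet|]; ring. }
  assert (Ex : IZR m * x - IZR z
               = IZR alpha * (IZR u * x - IZR p) - IZR beta * (IZR q - IZR v * x)).
  { rewrite Em, Ez, !plus_IZR, !mult_IZR. ring. }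
  rewrite Ex in Hlo, Hhi.
  destruct (Z_lt_le_dec 0 alpha) as [Ha|Ha], (Z_lt_le_dec 0 beta) as [Hb|Hb].
  - nia.
  - assert (1 <= IZR alpha) by (apply IZR_le; lia). apply IZR_le in Hb. nra.
  - assert (1 <= IZR beta) by (apply IZR_le; lia). apply IZR_le in Ha. nra.
  - nia.
Qed.

Lemma farey_bracket_distZ (x : R) (u p v q m : Z) :
  farey_bracket x u p v q -> (0 < m < u + v)%Z ->
  Rmin (IZR u * x - IZR p) (IZR q - IZR v * x) <= distZ (IZR m * x).
Proof.
  intros Hb Hm. destruct (distZ_attained (IZR m * x)) as [z <-].
  apply Rnot_lt_le. intros h.
  pose proof (Rmin_l (IZR u * x - IZR p) (IZR q - IZR v * x)).
  pose proof (Rmin_r (IZR u * x - IZR p) (IZR q - IZR v * x)).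
  apply Rabs_def2 in h.
  assert (Hgap : (u + v <= m)%Z)
    by (apply (farey_bracket_gap x u p v q m z); [exact Hb | lia | lra]).
  lia.
Qed.

Definition farey_balanced (x : R) (u p v q : Z) : Prop :=
  IZR u * x - IZR p <= 2 * (IZR q - IZR v * x) /\
  IZR q - IZR v * x <= 2 * (IZR u * x - IZR p).

Lemma farey_balanced_gap (x : R) (u p v q : Z) :
  farey_bracket x u p v q -> farey_balanced x u p v q ->
  1 <= 2 * IZR (u + v) * Rmin (IZR u * x - IZR p) (IZR q - IZR v * x).
Proof.
  intros [Hu [Hv [Hdet [Hp Hq]]]] [Hab Hba].
  assert (Hdet' : (IZR u * x - IZR p) * IZR v + (IZR q - IZR v * x) * IZR u = 1).
  { rewrite <- Hdet, minus_IZR, !mult_IZR. ring. }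
  apply IZR_lt in Hu. apply IZR_lt in Hv. rewrite plus_IZR.
  unfold Rmin. destruct Rle_dec; nra.
Qed.

Lemma farey_bracket_mediant_lower (x : R) (u p v q : Z) :
  farey_bracket x u p v q -> IZR (p + q) < IZR (u + v) * x ->
  farey_bracket x (u + v) (p + q) v q.
Proof. intros [Hu [Hv [Hdet [Hp Hq]]]] H. repeat split; auto; lia. Qed.

Lemma farey_bracket_mediant_upper (x : R) (u p v q : Z) :
  farey_bracket x u p v q -> IZR (u + v) * x < IZR (p + q) ->
  farey_bracket x u p (u + v) (p + q).
Proof. intros [Hu [Hv [Hdet [Hp Hq]]]] H. repeat split; auto; lia. Qed.

Section IrrationalFarey.

Variable x : R.
Hypothesis x_irr : irrational x.

Lemma farey_bracket_init : farey_bracket x 1 (Int_part x) 1 (Int_part x + 1).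
Proof.
  destruct (base_Int_part x) as [h1 h2].
  pose proof (irrational_mul_neq_Z x 1 (Int_part x) x_irr ltac:(lia)) as hne.
  rewrite Rmult_1_l in hne.
  repeat split; try lia; rewrite ?plus_IZR, Rmult_1_l; lra.
Qed.

Lemma farey_bracket_mediant (u p v q : Z) :
  farey_bracket x u p v q ->
  farey_bracket x (u + v) (p + q) v q \/ farey_bracket x u p (u + v) (p + q).
Proof.
  intros Hb. pose proof Hb as [Hu [Hv _]].
  pose proof (irrational_mul_neq_Z x (u + v) (p + q) x_irr ltac:(lia)).
  destruct (Rlt_or_le (IZR (p + q)) (IZR (u + v) * x)) as [h|h].
  - left. apply farey_bracket_mediant_lower; assumption.
  - right. apply farey_bracket_mediant_upper; [assumption | lra].
Qed.

Lemma farey_bracket_large (N : nat) :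
  exists u p v q, farey_bracket x u p v q /\ (Z.of_nat N <= u + v)%Z.
Proof.
  induction N as [|N [u [p [v [q [Hb HN]]]]]].
  - exists 1%Z, (Int_part x), 1%Z, (Int_part x + 1)%Z.
    split; [exact farey_bracket_init | lia].
  - pose proof Hb as [Hu [Hv _]].
    destruct (farey_bracket_mediant u p v q Hb) as [H|H];
      [exists (u + v)%Z, (p + q)%Z, v, q | exists u, p, (u + v)%Z, (p + q)%Z];
      split; auto; lia.
Qed.

(* A mediant step replaces the larger gap by the difference of the two gaps,
   which lowers the bound [k] on their ratio until they are within a factor 2. *)
Lemma farey_balanced_after (k : nat) (u p v q : Z) :
  farey_bracket x u p v q ->
  IZR u * x - IZR p <= INR k * (IZR q - IZR v * x) ->
  IZR q - IZR v * x <= INR k * (IZR u * x - IZR p) ->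
  exists u' p' v' q', farey_bracket x u' p' v' q' /\ farey_balanced x u' p' v' q' /\
    (u + v <= u' + v')%Z.
Proof.
  revert u p v q. induction k as [|k IH]; intros u p v q Hb Hab Hba;
    pose proof Hb as [Hu [Hv [_ [Hp Hq]]]].
  - simpl in Hab. lra.
  - rewrite S_INR in Hab, Hba. pose proof (pos_INR k).
    destruct (Rle_dec (IZR u * x - IZR p) (2 * (IZR q - IZR v * x))) as [h1|h1];
    [destruct (Rle_dec (IZR q - IZR v * x) (2 * (IZR u * x - IZR p))) as [h2|h2]|].
    + exists u, p, v, q. split; [exact Hb | split; [split; assumption | lia]].
    + destruct (IH u p (u + v)%Z (p + q)%Z) as [u' [p' [v' [q' [Hb' [Hbal Hle]]]]]].
      * apply farey_bracket_mediant_upper; [exact Hb|]. rewrite !plus_IZR. lra.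
      * rewrite !plus_IZR. nra.
      * rewrite !plus_IZR. lra.
      * exists u', p', v', q'. split; [exact Hb' | split; [exact Hbal | lia]].
    + destruct (IH (u + v)%Z (p + q)%Z v q) as [u' [p' [v' [q' [Hb' [Hbal Hle]]]]]].
      * apply farey_bracket_mediant_lower; [exact Hb|]. rewrite !plus_IZR. lra.
      * rewrite !plus_IZR. lra.
      * rewrite !plus_IZR. nra.
      * exists u', p', v', q'. split; [exact Hb' | split; [exact Hbal | lia]].
Qed.

Lemma farey_balanced_large (N : nat) :
  exists u p v q, farey_bracket x u p v q /\ farey_balanced x u p v q /\
    (Z.of_nat N <= u + v)%Z.
Proof.
  destruct (farey_bracket_large N) as [u [p [v [q [Hb HN]]]]].
  pose proof Hb as [_ [_ [_ [Hp Hq]]]].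
  remember (IZR u * x - IZR p) as a eqn:Ea. remember (IZR q - IZR v * x) as b eqn:Eb.
  assert (Ha : 0 < a) by lra. assert (Hb0 : 0 < b) by lra.
  destruct (INR_unbounded (a / b + b / a)) as [k hk].
  pose proof (Rdiv_lt_0_compat a b Ha Hb0). pose proof (Rdiv_lt_0_compat b a Hb0 Ha).
  destruct (farey_balanced_after k u p v q Hb) as [u' [p' [v' [q' [Hb' [Hbal Hle]]]]]].
  - rewrite <- Ea, <- Eb. replace a with (a / b * b) by (field; apply Rgt_not_eq, Hb0). nra.
  - rewrite <- Ea, <- Eb. replace b with (b / a * a) by (field; apply Rgt_not_eq, Ha). nra.
  - exists u', p', v', q'. split; [exact Hb' | split; [exact Hbal | lia]].
Qed.

Lemma min_dist_often_above_harmonic : often_above_harmonic (min_dist x).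
Proof.
  exists (1 / 4). split; [lra|]. intros K.
  destruct (farey_balanced_large (K + 2)) as [u [p [v [q [Hb [Hbal HN]]]]]].
  pose proof (farey_balanced_gap x u p v q Hb Hbal) as Hgap.
  pose proof (farey_bracket_distZ x u p v q) as Hdist.
  remember (Rmin (IZR u * x - IZR p) (IZR q - IZR v * x)) as c eqn:Ec.
  exists (Z.to_nat (u + v - 1)). split; [lia|].
  assert (HL : INR (Z.to_nat (u + v - 1)) = IZR (u + v) - 1).
  { rewrite INR_IZR_INZ, Z2Nat.id by lia. rewrite minus_IZR. reflexivity. }
  assert (Hc : c <= min_dist x (Z.to_nat (u + v - 1))).
  { apply min_dist_ge.
    - pose proof (Hdist 1%Z Hb ltac:(lia)).
      pose proof (distZ_le_half (IZR 1 * x)). lra.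
    - intros m hm. rewrite INR_IZR_INZ. apply Hdist; [exact Hb | lia]. }
  assert (H2 : 2 <= IZR (u + v)) by (apply IZR_le; lia).
  assert (Hc0 : 0 <= c) by nra.
  rewrite HL.
  assert ((IZR (u + v) - 1) * c <= (IZR (u + v) - 1) * min_dist x (Z.to_nat (u + v - 1)))
    by (apply Rmult_le_compat_l; lra).
  nra.
Qed.

End IrrationalFarey.

Lemma Q2R_eq_0 (q : Q) : Q2R q = 0 <-> q == 0.
Proof.
  split; intros H.
  - apply eqR_Qeq. rewrite H. unfold Q2R. simpl. ring.
  - rewrite (Qeq_eqR q 0 H). unfold Q2R. simpl. ring.
Qed.

Lemma Q_lin_dep3_cases (x y : R) : Q_lin_dep3 x y ->
  (exists q, x = Q2R q) \/ (exists b a, y = Q2R b * x + Q2R a).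
Proof.
  intros [a [b [c [Hnz He]]]].
  destruct (Qeq_dec c 0) as [Hc|Hc].
  - apply Q2R_eq_0 in Hc. rewrite Hc in He.
    destruct (Qeq_dec b 0) as [Hb|Hb].
    + exfalso. apply Q2R_eq_0 in Hb as Hb'. rewrite Hb' in He.
      apply Hnz. repeat split; [apply Q2R_eq_0; lra | exact Hb | apply Q2R_eq_0, Hc].
    + left. exists (- a / b)%Q. rewrite Q2R_div, Q2R_opp by exact Hb.
      rewrite <- Q2R_eq_0 in Hb.
      replace x with (Q2R b * x / Q2R b) by (field; exact Hb).
      replace (Q2R b * x) with (- Q2R a) by lra. reflexivity.
  - right. exists (- b / c)%Q, (- a / c)%Q. rewrite !Q2R_div, !Q2R_opp by exact Hc.
    rewrite <- Q2R_eq_0 in Hc.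
    replace y with (Q2R c * y / Q2R c) by (field; exact Hc).
    replace (Q2R c * y) with (- Q2R a - Q2R b * x) by lra. field. exact Hc.
Qed.

Lemma Q2R_mul_den (q : Q) : INR (Pos.to_nat (Qden q)) * Q2R q = IZR (Qnum q).
Proof.
  rewrite INR_IZR_INZ, positive_nat_Z. unfold Q2R. field.
  apply not_0_IZR. discriminate.
Qed.

Lemma Q2R_affine_mul_den (b a : Q) (x : R) : exists (s : nat) (Q P : Z),
  (1 <= s)%nat /\ INR s * (Q2R b * x + Q2R a) = IZR Q * x + IZR P.
Proof.
  exists (Pos.to_nat (Qden b * Qden a)), (Qnum b * Z.pos (Qden a))%Z,
    (Qnum a * Z.pos (Qden b))%Z.
  split; [lia|].
  rewrite Pos2Nat.inj_mul, mult_INR, !mult_IZR, <- (Q2R_mul_den b), <- (Q2R_mul_den a).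
  rewrite !INR_IZR_INZ, !positive_nat_Z. ring.
Qed.

Lemma not_in_Pi_of_minorant (psi : nat -> R) (N : nat) (x y : R) :
  in_D psi -> (forall n, (N <= n)%nat -> psi n <= distZ (INR n * x + y)) ->
  ~ in_Pi x y.
Proof.
  intros HD Hle HPi. destruct (HPi psi HD N) as [n [hn [_ hlt]]].
  specialize (Hle n hn). lra.
Qed.

Lemma not_in_Pi_rational_slope (x y : R) (t : nat) (r : Z) :
  irrational y -> (1 <= t)%nat -> INR t * x = IZR r -> ~ in_Pi x y.
Proof.
  intros Hy Ht Hx.
  assert (HT : 1 <= INR t) by (apply (le_INR 1); exact Ht).
  set (c := distZ (INR t * y) / INR t).
  assert (Hc : 0 < c) by (apply Rdiv_lt_0_compat; [apply distZ_mul_pos|]; auto; lra).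
  apply (not_in_Pi_of_minorant (fun _ => c) 0).
  - apply in_D_of_often_above_harmonic; [intros; lra | intros; lra|].
    exists c. split; [exact Hc|]. intros K. exists (S K). split; [lia|].
    rewrite S_INR. pose proof (pos_INR K). nra.
  - intros n _.
    assert (E : INR t * y = INR t * (INR n * x + y) + IZR (- (Z.of_nat n * r))).
    { rewrite opp_IZR, mult_IZR, <- INR_IZR_INZ, <- Hx. ring. }
    pose proof (distZ_mul_nat_le t (INR n * x + y)) as Hle.
    rewrite <- distZ_add_Z with (z := (- (Z.of_nat n * r))%Z), <- E in Hle.
    apply (Rmult_le_reg_l (INR t)); [lra|].
    unfold c. replace (INR t * (distZ (INR t * y) / INR t)) with (distZ (INR t * y))
      by (field; apply Rgt_not_eq; lra).
    exact Hle.
Qed.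

Lemma not_in_Pi_affine_dependent (x y : R) (s : nat) (Q P : Z) :
  irrational x -> (1 <= s)%nat -> INR s * y = IZR Q * x + IZR P -> ~ in_Pi x y.
Proof.
  intros Hx Hs Hy.
  assert (HS : 1 <= INR s) by (apply (le_INR 1); exact Hs).
  set (K := Z.abs_nat Q).
  set (psi := fun n => min_dist x (s * (n + K)) / INR s).
  apply (not_in_Pi_of_minorant psi (S K)).
  - apply in_D_of_often_above_harmonic.
    + intros n. unfold psi, Rdiv. apply Rmult_le_pos; [apply min_dist_nonneg|].
      left. apply Rinv_0_lt_compat. lra.
    + intros n. unfold psi, Rdiv.
      apply Rmult_le_compat_r; [left; apply Rinv_0_lt_compat; lra|].
      apply min_dist_antitone. nia.
    + apply often_above_harmonic_scale; [lra|].
      apply often_above_harmonic_dilate; [apply min_dist_succ_le | exact Hs |].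
      apply min_dist_often_above_harmonic, Hx.
  - intros n hn.
    set (L := Z.to_nat (Z.of_nat s * Z.of_nat n + Q)).
    assert (HL : INR L * x = INR s * (INR n * x + y) + IZR (- P)).
    { unfold L. rewrite INR_IZR_INZ, Z2Nat.id by (unfold K in hn; nia).
      rewrite opp_IZR, plus_IZR, mult_IZR, <- !INR_IZR_INZ.
      replace (INR s * (INR n * x + y)) with (INR s * INR n * x + INR s * y) by ring.
      rewrite Hy. ring. }
    assert (Hmin : min_dist x (s * (n + K)) <= distZ (INR L * x)).
    { eapply Rle_trans; [apply min_dist_antitone | apply min_dist_le_distZ];
        unfold L, K in *; nia. }
    rewrite HL, distZ_add_Z in Hmin.
    pose proof (distZ_mul_nat_le s (INR n * x + y)) as Hle.
    apply (Rmult_le_reg_l (INR s)); [lra|].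
    unfold psi. replace (INR s * (min_dist x (s * (n + K)) / INR s))
      with (min_dist x (s * (n + K))) by (field; apply Rgt_not_eq; lra).
    lra.
Qed.

Theorem lemma25 (x y : R) :
  Q_lin_dep3 x y -> (irrational x \/ irrational y) -> ~ in_Pi x y.
Proof.
  intros Hdep Hirr.
  destruct (Q_lin_dep3_cases x y Hdep) as [[q Hq] | [b [a Hy]]].
  - assert (Hy : irrational y).
    { destruct Hirr as [Hx | Hy]; [exfalso; apply Hx; exists q; exact Hq | exact Hy]. }
    apply (not_in_Pi_rational_slope x y (Pos.to_nat (Qden q)) (Qnum q) Hy); [lia|].
    rewrite Hq. apply Q2R_mul_den.
  - assert (Hx : irrational x).
    { destruct Hirr as [Hx | Hy']; [exact Hx|]. intros [q Hq]. apply Hy'.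
      exists (b * q + a)%Q. rewrite Hy, Q2R_plus, Q2R_mult, Hq. reflexivity. }
    destruct (Q2R_affine_mul_den b a x) as [s [Q [P [Hs HsQP]]]].
    rewrite <- Hy in HsQP.
    exact (not_in_Pi_affine_dependent x y s Q P Hx Hs HsQP).
Qed.
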